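(* For every integer $n\ge 0$, as polynomials in $u$, $$P_{n+1}(u;0,1)=\frac{u}{2^n}\,S_n\!\left(u;0,1,-\tfrac12\right).$$ In particular, all coefficients of the polynomial $2^{-n}S_n(u;0,1,-\tfrac12)$ are integers.
   Context: Eulerian numbers: $\left\langle {n\atop k}\right\rangle$ is the number of permutations of $\{1,\dots,n\}$ with exactly $k$ ascents (indices $j$ with $a_j<a_{j+1}$). Define $P_1(u;a,b)=u-a$ and, for $n\ge1$, $P_{n+1}(u;a,b)=\sum_{k=0}^{n-1}\left\langle {n\atop k}\right\rangle (u-a)^{k+1}(u-b)^{n-k}$. The MacMahon numbers $M_{n,k}$ ($n\ge1$, $1\le k\le n$) are defined by $M_{n,1}=1$ and, for $n\ge 2$, $2\le k\le n$, $M_{n,k}=(2k-1)M_{n-1,k}+(2n-2k+1)M_{n-1,k-1}$, with $M_{n-1,n}=0$. Define $Q_n(u;a,b)=\sum_{k=1}^{n+1}M_{n+1,k}(u-a)^{n+1-k}(u-b)^{k-1}$ and $S_n(u;a,b,d)=\sum_{k=0}^{n}\binom{n}{k}(2d)^kQ_{n-k}(u;a,b)$. *)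

From HB Require Import structures.
From mathcomp Require Import all_boot all_order all_algebra all_fingroup.
Set Implicit Arguments. Unset Strict Implicit. Unset Printing Implicit Defensive.
Import Order.TTheory GRing.Theory Num.Theory.

(* value of a permutation of {0..n-1} at a natural index (0 outside range) *)
Definition perm_at (n : nat) (s : 'S_n) (j : nat) : nat :=
  if @insub nat (fun j => j < n) 'I_n j is Some i then val (s i) else 0.

Definition ascents (n : nat) (s : 'S_n) : nat :=
  count (fun j => perm_at s j < perm_at s j.+1) (iota 0 n.-1).

Definition eulerian (n k : nat) : nat := #|[set s : 'S_n | ascents s == k]|.

Fixpoint macmahon (n k : nat) : nat :=
  match n with
  | 0 => 0
  | n'.+1 =>
      if k == 1 then 1
      else if (k == 0) || (n < k) then 0
      else (2 * k - 1) * macmahon n' k + (2 * n - 2 * k + 1) * macmahon n' k.-1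
  end.

Local Open Scope ring_scope.

(* P_m(u;a,b), m >= 1 (P_0 is unused; set to 0) *)
Definition Ppoly (m : nat) (a b : rat) : {poly rat} :=
  match m with
  | 0%N => 0
  | 1%N => 'X - a%:P
  | n.+1 => \sum_(k < n) (eulerian n k)%:R
              *: (('X - a%:P) ^+ k.+1 * ('X - b%:P) ^+ (n - k))
  end.

Definition Qpoly (n : nat) (a b : rat) : {poly rat} :=
  \sum_(1 <= k < n.+2) (macmahon n.+1 k)%:R
     *: (('X - a%:P) ^+ (n.+1 - k) * ('X - b%:P) ^+ (k.-1)).

Definition Spoly (n : nat) (a b d : rat) : {poly rat} :=
  \sum_(k < n.+1) ('C(n, k)%:R * (2 * d) ^+ k) *: Qpoly (n - k) a b.

(* Write E_N(u) = sum over s in S_N of u^asc(s) (u-1)^(N-asc(s)), so that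
   P_(N+1)(u;0,1) = u E_N(u) by grouping permutations by their number of
   ascents.  The proof rests on two first-order recurrences:

   - inserting the letter N into the N+1 gaps of a permutation word of
     {0..N-1} keeps the ascent count at asc+1 positions and raises it by one
     at the others, which gives  E_(N+1) = (u-1) (E_N + u E_N');
   - the MacMahon recurrence says exactly that Q_(m+1)(u;0,1) = L (Q_m(u;0,1))
     for the operator  L f = (2u-1) f + 2u(u-1) f',  hence Q_m = L^m 1.

   With d = -1/2 the definition of S_n is a binomial expansion, so
   S_n(u;0,1,-1/2) = (L - id)^n 1.  Finally (L - id) E_N = 2 E_(N+1), whence
   2^-n S_n(u;0,1,-1/2) = E_n, which is u^-1 P_(n+1)(u;0,1) and visibly has
   integer coefficients. *)

From HB Require Import structures.
From mathcomp Require Import all_boot all_order all_algebra all_fingroup.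
From mathcomp Require Import ring zify.
Import GRing.Theory Num.Theory.

Set Implicit Arguments.
Unset Strict Implicit.
Unset Printing Implicit Defensive.

Fixpoint ascents_from (p : nat) (t : seq nat) : nat :=
  if t is y :: t' then (p < y) + ascents_from y t' else 0.

Definition asc (l : seq nat) : nat :=
  if l is x :: t then ascents_from x t else 0.

Definition insert_at (j m : nat) (l : seq nat) : seq nat :=
  take j l ++ m :: drop j l.

Lemma ascents_from_le p t : ascents_from p t <= size t.
Proof.
elim: t p => [//|y t IH] p /=.
by rewrite -add1n; apply: leq_add (leq_b1 _) (IH y).
Qed.

Lemma sum_insert_from (V : nmodType) (f : nat -> V) m p t :
  p < m -> all (fun x => x < m) t ->
  (\sum_(j < (size t).+1) f (ascents_from p (insert_at j m t)))%R =
  (f (ascents_from p t) *+ ascents_from p t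
   + f (ascents_from p t).+1 *+ ((size t).+1 - ascents_from p t))%R.
Proof.
elim: t f p => [|y t IH] f p hp /=.
  by move=> _; rewrite big_ord1 /insert_at /= hp mulr0n add0r.
case/andP=> hy ht.
rewrite big_ord_recl /insert_at /= hp ltnNge ltnW //= add0n.
have := IH (fun a => f ((p < y) + a)) y hy ht; rewrite /insert_at => ->.
have hb := ascents_from_le y t.
case: (p < y) => /=.
  by rewrite add1n addrA -mulrS subSS add1n.
rewrite !add0n addrCA -mulrS subSn // add1n.
by rewrite [in RHS]subSn ?subSn // leqW.
Qed.

Lemma sum_insert (V : nmodType) (f : nat -> V) m l :
  all (fun x => x < m) l ->
  (\sum_(j < (size l).+1) f (asc (insert_at j m l)))%R =
  (f (asc l) *+ (asc l).+1 + f (asc l).+1 *+ (size l - asc l))%R.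
Proof.
case: l => [|x t] /=.
  by move=> _; rewrite big_ord1 /insert_at /= mulr0n addr0.
case/andP=> hx ht.
rewrite big_ord_recl /insert_at /= ltnNge ltnW //= add0n.
have := sum_insert_from f hx ht; rewrite /insert_at => ->.
by rewrite addrA -mulrS.
Qed.

Lemma index_insert m j l : m \notin l -> j <= size l ->
  index m (insert_at j m l) = j.
Proof.
move=> hm hj; rewrite /insert_at index_cat.
have -> : (m \in take j l) = false.
  by apply/negbTE; apply: contra hm; apply: mem_take.
by rewrite /= eqxx addn0 size_take_min (minn_idPl hj).
Qed.

Lemma rem_insert m j l : m \notin l -> j <= size l -> rem m (insert_at j m l) = l.
Proof.
move=> hm hj; rewrite remE index_insert // /insert_at.
have hs : size (take j l) = j by rewrite size_take_min (minn_idPl hj).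
rewrite take_size_cat // drop_cat hs ltnNge leqnSn /= subSnn /=.
by rewrite drop0 cat_take_drop.
Qed.

Lemma insert_index_rem m l : m \in l -> insert_at (index m l) m (rem m l) = l.
Proof.
elim: l => [//|a l IH] /=.
rewrite in_cons eq_sym; case: eqP => [-> _|_ hm] /=.
  by rewrite /insert_at take0 drop0.
by rewrite /insert_at /= -/(insert_at _ _ _) IH.
Qed.

Lemma insert_at_inj m j1 j2 l1 l2 :
  m \notin l1 -> m \notin l2 -> j1 <= size l1 -> j2 <= size l2 ->
  insert_at j1 m l1 = insert_at j2 m l2 -> j1 = j2 /\ l1 = l2.
Proof.
move=> hm1 hm2 hj1 hj2 E.
have Ej : j1 = j2 by rewrite -(index_insert hm1 hj1) E index_insert.
by split; rewrite // -(rem_insert hm1 hj1) E rem_insert.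
Qed.

Lemma perm_insert n j l :
  perm_eq l (iota 0 n) -> perm_eq (insert_at j n l) (iota 0 n.+1).
Proof.
move=> hl; rewrite /insert_at -cat1s perm_catCA cat_take_drop cat1s.
by rewrite -addn1 iotaD add0n cats1 perm_sym perm_rcons perm_cons perm_sym.
Qed.

Lemma permutations_insert n : perm_eq (permutations (iota 0 n.+1))
  [seq insert_at j n l | l <- permutations (iota 0 n), j <- iota 0 n.+1].
Proof.
have notin l : l \in permutations (iota 0 n) -> n \notin l.
  by rewrite mem_permutations => /perm_mem ->; rewrite mem_iota ltnn andbF.
have size_l l : l \in permutations (iota 0 n) -> size l = n.
  by rewrite mem_permutations => /perm_size ->; rewrite size_iota.
apply: uniq_perm; first exact: permutations_uniq.
  apply: allpairs_uniq; [exact: permutations_uniq | exact: iota_uniq|].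
  move=> [l j] [l' j'] /allpairsP[[l1 j1] [hl1 hj1 [-> ->]]]
    /allpairsP[[l2 j2] [hl2 hj2 [-> ->]]] /= E.
  move: hl1 hl2 hj1 hj2; rewrite !mem_iota !add0n !ltnS /= => hl1 hl2.
  rewrite -{1}(size_l _ hl1) -(size_l _ hl2) => hj1 hj2.
  by have [-> ->] := insert_at_inj (notin _ hl1) (notin _ hl2) hj1 hj2 E.
move=> x; rewrite mem_permutations; apply/idP/idP; last first.
  by case/allpairsP=> [[l j] [/= hl _ ->]]; apply: perm_insert; rewrite -mem_permutations.
move=> hx.
have hn : n \in x by rewrite (perm_mem hx) mem_iota add0n ltnSn.
apply/allpairsP; exists (rem n x, index n x); split.
- rewrite mem_permutations -(perm_cons n) perm_sym.
  apply: perm_trans (perm_to_rem hn); rewrite perm_sym; apply: perm_trans hx _.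
  by rewrite -addn1 iotaD add0n cats1 perm_rcons.
- by rewrite mem_iota add0n -[n.+1](size_iota 0) -(perm_size hx) index_mem.
- by rewrite /= insert_index_rem.
Qed.

Definition perm_word N (s : 'S_N) : seq nat := [seq perm_at s j | j <- iota 0 N].

Lemma perm_at_ord N (s : 'S_N) (i : 'I_N) : perm_at s i = s i.
Proof.
rewrite /perm_at; case: insubP => [j _ /val_inj -> //|].
by rewrite ltn_ord.
Qed.

Lemma ascents_from_map f k m :
  ascents_from (f m) [seq f j | j <- iota m.+1 k]
  = count (fun j => f j < f j.+1) (iota m k).
Proof. by elim: k m => [//|k IH] m /=; rewrite IH. Qed.

Lemma ascents_word N (s : 'S_N) : ascents s = asc (perm_word s).
Proof. by rewrite /perm_word; case: N s => [//|N] s /=; rewrite ascents_from_map. Qed.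

Lemma perm_word_perm N (s : 'S_N) : perm_eq (perm_word s) (iota 0 N).
Proof.
apply: uniq_perm; [|exact: iota_uniq|].
- rewrite map_inj_in_uniq ?iota_uniq // => i j.
  rewrite !mem_iota !add0n => /andP[_ hi] /andP[_ hj].
  rewrite (perm_at_ord s (Ordinal hi)) (perm_at_ord s (Ordinal hj)).
  by move/val_inj/perm_inj => [].
- move=> x; rewrite mem_iota leq0n add0n; apply/mapP/idP.
    case=> j; rewrite mem_iota add0n => /andP[_ hj] ->.
    by rewrite (perm_at_ord s (Ordinal hj)) ltn_ord.
  move=> hx; exists (val ((s^-1)%g (Ordinal hx))).
    by rewrite mem_iota add0n ltn_ord.
  by rewrite perm_at_ord permKV.
Qed.

Lemma perm_word_inj N : injective (@perm_word N).
Proof.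
move=> s t E; apply/permP => i; apply/val_inj.
have : nth 0 (perm_word s) i = nth 0 (perm_word t) i by rewrite E.
rewrite /perm_word !(nth_map 0) ?size_iota ?ltn_ord // nth_iota ?ltn_ord //.
by rewrite add0n !perm_at_ord.
Qed.

Lemma perm_word_surj N l : perm_eq l (iota 0 N) -> exists s : 'S_N, perm_word s = l.
Proof.
move=> hl.
have sl : size l = N by rewrite (perm_size hl) size_iota.
have lt_nth (i : 'I_N) : nth 0 l i < N.
  have : nth 0 l i \in l by rewrite mem_nth ?sl.
  by rewrite (perm_mem hl) mem_iota add0n.
have ul : uniq l by rewrite (perm_uniq hl) iota_uniq.
have nth_inj : injective (fun i : 'I_N => Ordinal (lt_nth i)).
  by move=> i j [] /eqP; rewrite nth_uniq ?sl // => /eqP /val_inj.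
exists (perm nth_inj).
rewrite -[RHS](mkseq_nth 0) sl /mkseq /perm_word; apply/eq_in_map => j.
rewrite mem_iota add0n => /andP[_ hj].
by rewrite (perm_at_ord _ (Ordinal hj)) permE.
Qed.

Lemma sum_perm_words (V : nmodType) N (F : seq nat -> V) :
  (\sum_(s : 'S_N) F (perm_word s))%R = (\sum_(l <- permutations (iota 0 N)) F l)%R.
Proof.
rewrite -(big_map (@perm_word N) predT F); apply: perm_big.
apply: uniq_perm; [|exact: permutations_uniq|].
  by rewrite map_inj_uniq ?index_enum_uniq //; exact: perm_word_inj.
move=> l; rewrite mem_permutations; apply/mapP/idP.
  by case=> s _ ->; exact: perm_word_perm.
by case/perm_word_surj => s <-; exists s; rewrite ?mem_index_enum.
Qed.

Lemma macmahon0 n : macmahon n 0 = 0.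
Proof. by case: n. Qed.

Lemma macmahon_gt n k : n < k -> macmahon n k = 0.
Proof.
case: n => [//|n] /= lt_nk.
by rewrite lt_nk orbT; case: k lt_nk => [|[|k]].
Qed.

Lemma macmahon_rec n k : macmahon n.+2 k =
  (2 * k - 1) * macmahon n.+1 k + (2 * n.+2 - 2 * k + 1) * macmahon n.+1 k.-1.
Proof.
case: k => [|[|k]]; first by rewrite !macmahon0 !muln0.
  by rewrite /= muln0 addn0.
have [lt_nk|le_kn] := ltnP n.+2 k.+2.
  by rewrite !macmahon_gt ?(ltnW lt_nk) //; lia.
by rewrite /= ltnNge le_kn.
Qed.

Arguments macmahon : simpl never.

Local Open Scope ring_scope.

(* The Euler-type operator u(u-c) d/du acts diagonally on the products
   u^a (u-c)^b; this drives both recurrences below. *)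
Lemma euler_deriv_XnXsubCn (R : comNzRingType) (c : R) a b :
  'X * ('X - c%:P) * ('X^a * ('X - c%:P) ^+ b)^`()
  = (a%:R * ('X - c%:P) + b%:R * 'X) * ('X^a * ('X - c%:P) ^+ b).
Proof.
rewrite derivM derivXn deriv_exp derivXsubC mul1r.
move: ('X - c%:P) => y; move: ('X : {poly R}) => x.
by case: a => [|a]; case: b => [|b];
  rewrite /= ?mulr0n ?mul0r ?mulr0 ?add0r ?addr0 ?expr0 ?exprS; ring.
Qed.

Definition eul_weight (N a : nat) : {poly rat} := 'X^a * ('X - 1%:P) ^+ (N - a).

Definition eulerian_poly (N : nat) : {poly rat} :=
  \sum_(s : 'S_N) eul_weight N (ascents s).

Lemma eulerian_poly_words N :
  eulerian_poly N = \sum_(l <- permutations (iota 0 N)) eul_weight N (asc l).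
Proof.
rewrite /eulerian_poly; under eq_bigr do rewrite ascents_word.
exact: (@sum_perm_words _ N (fun l => eul_weight N (asc l))).
Qed.

Lemma eulerian_poly0 : eulerian_poly 0 = 1.
Proof. by rewrite eulerian_poly_words big_seq1 /eul_weight expr0 mulr1. Qed.

Lemma eul_weight_insert N a : (a <= N)%N ->
  eul_weight N.+1 a *+ a.+1 + eul_weight N.+1 a.+1 *+ (N - a)
  = ('X - 1%:P) * (eul_weight N a + 'X * (eul_weight N a)^`()).
Proof.
move=> ha; rewrite /eul_weight subSn // subSS.
have Ew := euler_deriv_XnXsubCn (1 : rat) a (N - a).
set y := 'X - 1%:P in Ew *; set w := 'X^a * y ^+ (N - a) in Ew *.
have -> : 'X^a * y ^+ (N - a).+1 = y * w by rewrite /w exprS; ring.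
have -> : 'X^(a.+1) * y ^+ (N - a) = 'X * w by rewrite /w exprS; ring.
have -> : y * (w + 'X * w^`()) = y * w + 'X * y * w^`() by ring.
by rewrite Ew; clearbody w y; ring.
Qed.

Lemma eulerian_poly_rec N :
  eulerian_poly N.+1
  = ('X - 1%:P) * (eulerian_poly N + 'X * (eulerian_poly N)^`()).
Proof.
rewrite !eulerian_poly_words (perm_big _ (permutations_insert N)).
rewrite big_allpairs_dep raddf_sum mulr_sumr -big_split mulr_sumr.
rewrite !big_seq; apply: eq_bigr => l; rewrite mem_permutations => hl.
have size_l : size l = N by rewrite (perm_size hl) size_iota.
have lt_N : all (fun x => x < N)%N l.
  by apply/allP => x; rewrite (perm_mem hl) mem_iota add0n.
have -> : iota 0 N.+1 = index_iota 0 N.+1 by rewrite /index_iota subn0.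
rewrite big_mkord.
have := sum_insert (eul_weight N.+1) lt_N; rewrite size_l => ->.
rewrite eul_weight_insert // -size_l.
by case: l {hl size_l lt_N} => //= x t; rewrite ltnW // ltnS ascents_from_le.
Qed.

Lemma ascents_lt N (s : 'S_N.+1) : (ascents s < N.+1)%N.
Proof. by rewrite /ascents ltnS (leq_trans (count_size _ _)) // size_iota. Qed.

Lemma eulerian_poly_coef N :
  eulerian_poly N.+1 = \sum_(k < N.+1) (eulerian N.+1 k)%:R *: eul_weight N.+1 k.
Proof.
rewrite /eulerian_poly (partition_big (fun s => Ordinal (ascents_lt s)) xpredT) //.
apply: eq_bigr => k _.
rewrite (eq_bigr (fun _ => eul_weight N.+1 k)); last by move=> s /andP[_ /eqP <-].
rewrite (eq_bigl (fun s => s \in [set s : 'S_N.+1 | ascents s == k])); last first.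
  by move=> s; rewrite inE -val_eqE.
by rewrite sumr_const scaler_nat.
Qed.

Lemma Ppoly_eulerian n : Ppoly n.+1 0 1 = 'X * eulerian_poly n.
Proof.
case: n => [|N]; first by rewrite eulerian_poly0 /Ppoly subr0 mulr1.
rewrite eulerian_poly_coef /Ppoly mulr_sumr; apply: eq_bigr => k _.
by rewrite -scalerAr /eul_weight subr0 exprS mulrA.
Qed.

Lemma eulerian_poly_over (S : subringClosed rat) N :
  eulerian_poly N \is a polyOver S.
Proof.
apply: rpred_sum => s _; apply: rpredM; first exact: polyOverXn.
by apply: rpredX; rewrite polyOverXsubC rpred1.
Qed.

Definition mac_op (f : {poly rat}) : {poly rat} :=
  (2%:R * 'X - 1) * f + 2%:R * ('X * ('X - 1%:P)) * f^`().

Fact mac_op_linear : linear mac_op.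
Proof.
move=> c p q; rewrite /mac_op derivD derivZ !mulrDr -!scalerAr scalerDr.
by rewrite addrACA.
Qed.

HB.instance Definition _ :=
  GRing.isLinear.Build rat {poly rat} {poly rat} _ mac_op mac_op_linear.

Lemma mac_op_XnXsubCn a b :
  mac_op ('X^a * ('X - 1%:P) ^+ b)
  = (2 * b + 1)%:R *: ('X^(a.+1) * ('X - 1%:P) ^+ b)
    + (2 * a + 1)%:R *: ('X^a * ('X - 1%:P) ^+ b.+1).
Proof.
rewrite /mac_op -mulrA euler_deriv_XnXsubCn -!mul_polyC !polyC_natr.
rewrite !exprS polyC1; move: ('X : {poly rat}) => x.
ring.
Qed.

(* The k-th term of Q_m(u;0,1), and Q_m written as a sum over 0 <= k < m+3:
   the terms k = 0 and k = m+2 vanish, which makes the index shifts below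
   uniform. *)
Definition mac_term (m k : nat) : {poly rat} := 'X^(m.+1 - k) * ('X - 1%:P) ^+ k.-1.

Lemma Qpoly_padded m :
  Qpoly m 0 1 = \sum_(k < m.+3) (macmahon m.+1 k)%:R *: mac_term m k.
Proof.
rewrite /Qpoly -(big_mkord xpredT (fun k => (macmahon m.+1 k)%:R *: mac_term m k)).
rewrite [RHS]big_ltn // macmahon0 mulr0n scale0r add0r [RHS]big_nat_recr //.
rewrite macmahon_gt // mulr0n scale0r Monoid.mulm1.
by apply: eq_bigr => k _; rewrite /mac_term subr0.
Qed.

Lemma mac_op_term m k : (k < m.+3)%N ->
  (macmahon m.+1 k)%:R *: mac_op (mac_term m k) =
  ((2 * k - 1) * macmahon m.+1 k)%:R *: mac_term m.+1 k +
  ((2 * m.+2 - 2 * k.+1 + 1) * macmahon m.+1 k)%:R *: mac_term m.+1 k.+1.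
Proof.
case: k => [|k] lt_km; first by rewrite macmahon0 !muln0 !mulr0n !scale0r addr0.
have [lt_km1|le_mk] := ltnP k m.+1; last first.
  have -> : k = m.+1 by lia.
  by rewrite macmahon_gt // !muln0 !mulr0n !scale0r addr0.
rewrite /mac_term !succnK mac_op_XnXsubCn scalerDr !scalerA -!natrM.
move: (macmahon m.+1 k.+1) => c.
have [d ->] : exists d, m = (k + d)%N by exists (m - k)%N; lia.
have -> : ((k + d).+2 - k.+1 = d.+1)%N by lia.
have -> : ((k + d).+2 - k.+2 = d)%N by lia.
have -> : ((k + d).+1 - k.+1 = d)%N by lia.
by congr (_%:R *: _ + _%:R *: _); lia.
Qed.

Lemma Qpoly_rec m : Qpoly m.+1 0 1 = mac_op (Qpoly m 0 1).
Proof.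
rewrite !Qpoly_padded linear_sum.
under eq_bigr do rewrite macmahon_rec natrD scalerDl.
rewrite big_split /= [X in X + _]big_ord_recr [X in _ + X]big_ord_recl /=.
rewrite macmahon_gt // muln0 mulr0n scale0r Monoid.mulm1.
rewrite macmahon0 muln0 mulr0n scale0r Monoid.mul1m -big_split.
by apply: eq_bigr => k _; rewrite linearZ /= mac_op_term.
Qed.

Lemma Qpoly_iter m : Qpoly m 0 1 = iter m mac_op 1.
Proof.
elim: m => [|m IH]; last by rewrite Qpoly_rec IH.
by rewrite /Qpoly big_nat1 /= scale1r subr0 !expr0 mulr1.
Qed.

Lemma iter_sub_id (R : pzRingType) (V : lmodType R) (f : {linear V -> V}) n v :
  iter n (fun w => f w - w) v
  = \sum_(k < n.+1) ('C(n, k)%:R * (-1) ^+ k) *: iter (n - k) f v.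
Proof.
elim: n => [|n IH]; first by rewrite big_ord1 expr0 mulr1 scale1r.
have pascal :
  \sum_(k < n.+1) ('C(n.+1, k.+1)%:R * (-1) ^+ k.+1) *: iter (n - k) f v
  = \sum_(k < n.+1) ('C(n, k.+1)%:R * (-1) ^+ k.+1) *: iter (n - k) f v
    - \sum_(k < n.+1) ('C(n, k)%:R * (-1) ^+ k) *: iter (n - k) f v.
  rewrite -sumrB; apply: eq_bigr => k _.
  rewrite binS natrD mulrDl scalerDl; congr (_ + _).
  by rewrite exprS mulN1r mulrN scaleNr.
rewrite iterS IH linear_sum big_ord_recl subn0 linearZ /= -iterS.
rewrite [in RHS]big_ord_recl subn0 bin0 !expr0 !mulr1 !scale1r -addrA.
congr (_ + _); rewrite pascal; congr (_ - _).
rewrite big_ord_recr /= bin_small // mul0r scale0r addr0.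
by apply: eq_bigr => k _; rewrite linearZ /= -iterS /bump leq0n add1n subnSK.
Qed.

Lemma Spoly_iter n :
  Spoly n 0 1 (- (1 / 2)) = iter n (fun p => mac_op p - p) 1.
Proof.
rewrite /Spoly (iter_sub_id mac_op).
have -> : 2 * - (1 / 2) = -1 :> rat by rewrite mulrN div1r mulfV.
by apply: eq_bigr => k _; rewrite Qpoly_iter.
Qed.

(* (L - id) E_N = 2 E_(N+1): this is the Eulerian recurrence. *)
Lemma mac_op_eulerian N :
  mac_op (eulerian_poly N) - eulerian_poly N = 2 *: eulerian_poly N.+1.
Proof.
rewrite eulerian_poly_rec /mac_op -mul_polyC polyC1.
have -> : (2 : rat)%:P = 2 by rewrite -polyC_natr.
move: (eulerian_poly N) (eulerian_poly N)^`() ('X : {poly rat}) => p q x.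
ring.
Qed.

Lemma Spoly_eulerian n :
  (2 ^+ n)^-1 *: Spoly n 0 1 (- (1 / 2)) = eulerian_poly n.
Proof.
suff -> : Spoly n 0 1 (- (1 / 2)) = 2 ^+ n *: eulerian_poly n.
  by rewrite scalerA mulVf ?scale1r // expf_neq0.
rewrite Spoly_iter; elim: n => [|n IH]; first by rewrite eulerian_poly0 scale1r.
by rewrite iterS IH linearZ /= -scalerBr mac_op_eulerian scalerA -exprSr.
Qed.

Theorem mainTheorem8 (n : nat) :
  Ppoly n.+1 0 1 = 'X * ((2 ^+ n)^-1 *: Spoly n 0 1 (- (1 / 2)))
  /\ (forall i : nat, ((2 ^+ n)^-1 *: Spoly n 0 1 (- (1 / 2)))`_i \in Num.int).
Proof.
rewrite Spoly_eulerian; split; first exact: Ppoly_eulerian.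
by move=> i; apply/polyOverP/eulerian_poly_over.
Qed.
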